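(* For every integer $t\ge 2$, the dynamic geometric grid $G^{(t)}$ satisfies: (i) (geometric spacing) for every integer $d$ with $1\le d\le t/2$ there exists $g\in G^{(t)}$ with $d/2\le g\le d$; (ii) (logarithmic cardinality) $|G^{(t)}|<3\log t$; (iii) (recycling) $\{g-1: g\in G^{(t+1)}\setminus\{1\}\}\subseteq G^{(t)}$, equivalently $(t+1)-G^{(t+1)}\subseteq (t-G^{(t)})\cup\{t\}$.
   Context: $\log$ denotes the natural logarithm. For integers $a$ and $b\ge 1$, $a \bmod b = a-b\lfloor a/b\rfloor$. For a set $\mathcal X$ of reals and a real $x$, $x-\mathcal X=\{x-s:s\in\mathcal X\}$. For an integer $t\ge 2$ the dynamic geometric grid is $$G^{(t)}=\{1\}\cup\bigcup_{j=1}^{\lfloor \log_2\{(t-1)/3\}\rfloor+1}\{g^{(t)}_{L,j}\}\cup\bigcup_{j=1}^{\lfloor\log_2(t-1)\rfloor-1}\{g^{(t)}_{R,j}\},$$ where $g^{(t)}_{L,j}=2^j+\{(t-1)\bmod 2^{j-1}\}$ and $g^{(t)}_{R,j}=g^{(t)}_{L,j}+2^{j-1}$; a union whose upper index is smaller than $1$ is empty. *)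

From mathcomp Require Import all_boot.
From Stdlib Require Import Reals.

Set Implicit Arguments.
Unset Strict Implicit.
Unset Printing Implicit Defensive.

(* Upper index of the left family: floor(log2((t-1)/3)) + 1, and an empty
   union when this is < 1.  For t-1 >= 3, floor(log2((t-1)/3)) is the
   largest j with 2^j <= (t-1)/3, i.e. trunc_log 2 ((t-1) %/ 3);
   for 1 <= t-1 < 3 the value floor(log2((t-1)/3)) + 1 is <= 0. *)
Definition gridL_top (t : nat) : nat :=
  if 3 <= t - 1 then (trunc_log 2 ((t - 1) %/ 3)).+1 else 0.

Definition gridR_top (t : nat) : nat := trunc_log 2 (t - 1) - 1.

Definition gL (t j : nat) : nat := 2 ^ j + (t - 1) %% 2 ^ (j - 1).
Definition gR (t j : nat) : nat := gL t j + 2 ^ (j - 1).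

Definition grid (t : nat) : seq nat :=
  1 :: [seq gL t j | j <- iota 1 (gridL_top t)]
    ++ [seq gR t j | j <- iota 1 (gridR_top t)].

Definition grid_card (t : nat) : nat := size (undup (grid t)).

From Pilot Require Import Defs.
From mathcomp Require Import all_boot zify.
From Stdlib Require Import Reals Lra.

(* [Reals] rebinds [^] in [nat_scope] to [Nat.pow], the power used in [Defs];
   here it denotes [expn] again. *)
Local Notation "m ^ n" := (expn m n) : nat_scope.

(* The left element of level j+1 is 2^(j+1) + ((t-1) mod 2^j) and the right
   one is 2^j larger, so each dyadic range [2^(j+1), 2^(j+2)) receives one
   point below and one point above 3 2^j: this is the geometric spacing.
   The left family has at most floor(log2 t) members and the right one fewer,
   so |G^(t)| <= 2 floor(log2 t), which is < 3 ln t because ln 2 > 2/3.  Going from t to t+1 increments the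
   residue (t-1) mod 2^j, so g-1 is the element of G^(t) of the same level and
   family, unless 2^j divides t: then the residue wraps around to 0, and g-1
   is 2^(j+1) - 1 (left family), the right element of level j of G^(t), or
   3 2^j - 1 (right family), the left element of level j+1 of G^(t). *)

Lemma INR_expn m n : INR (m ^ n) = (INR m ^ n)%R.
Proof. by elim: n => [|n IHn] //; rewrite expnS -multE mult_INR IHn. Qed.

Lemma ln2_gt_2_3 : (2 / 3 < ln 2)%R.
Proof.
have exp_lt : (exp (1 / 15) < 15 / 14)%R.
  have := exp_ineq1 (- (1 / 15)) ltac:(lra); rewrite exp_Ropp.
  have := exp_pos (1 / 15); have := Rinv_r (exp (1 / 15)).
  set e := exp _ => eVe e_gt0 lt_eV.
  have {}eVe : (e * / e = 1)%R by apply: eVe; lra.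
  nra.
have ln_gt : (1 / 15 < ln (15 / 14))%R.
  by rewrite -{1}(ln_exp (1 / 15)); apply: ln_increasing => //; apply: exp_pos.
have : (ln ((15 / 14) ^ 10) < ln 2)%R by apply: ln_increasing; simpl; lra.
by rewrite ln_pow; [simpl; lra | lra].
Qed.

Lemma double_lt_3ln a t :
  0 < a -> 2 ^ a <= t -> (INR (a + a) < 3 * ln (INR t))%R.
Proof.
move=> a_gt0 /leP/le_INR; rewrite INR_expn (_ : INR 2 = 2%R) => [le_t|]; last first.
  by simpl; lra.
have a_ge1 : (1 <= INR a)%R by apply: (le_INR 1); apply/leP.
have pow_gt0 : (0 < 2 ^ a)%R by apply: pow_lt; lra.
have : (ln (2 ^ a) <= ln (INR t))%R.
  by case: (Rle_lt_or_eq_dec _ _ le_t) => [lt_t | <-]; [left; apply: ln_increasing | right].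
rewrite ln_pow; last by lra.
rewrite plus_INR; have := ln2_gt_2_3; nra.
Qed.

Lemma leq_trunc_log2 m j : 0 < m -> (j <= trunc_log 2 m) = (2 ^ j <= m).
Proof.
move=> m_gt0; apply/idP/idP => [le_j | ]; last exact: trunc_log_max.
by apply: leq_trans (trunc_logP (isT : 1 < 2) m_gt0); rewrite leq_exp2l.
Qed.

Lemma gridL_topP t j : (j.+1 <= gridL_top t.+1) = (3 * 2 ^ j <= t).
Proof.
rewrite /gridL_top subn1 /=; case: ifP => [le_3t | gt_3t]; last first.
  by have := expn_gt0 2 j; lia.
by rewrite ltnS leq_trunc_log2 ?divn_gt0 // leq_divRL // mulnC.
Qed.

Lemma gridR_topP t j : (j.+1 <= gridR_top t.+1) = (2 ^ j.+2 <= t).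
Proof.
rewrite /gridR_top subSS subn0; case: (posnP t) => [-> | t_gt0].
  by rewrite trunc_log0; have := expn_gt0 2 j.+2; lia.
by rewrite -leq_trunc_log2 //; lia.
Qed.

Lemma gridL_top_le t : gridL_top t.+1 <= trunc_log 2 t.+1.
Proof.
case def_l: (gridL_top t.+1) => [|l] //.
have := gridL_topP t l; rewrite def_l leqnn => /esym le_t.
by apply: trunc_log_max => //; rewrite expnS; lia.
Qed.

Lemma Nat_powE m n : Nat.pow m n = m ^ n.
Proof. by elim: n => //= n ->; rewrite expnS. Qed.

Lemma gLS t j : gL t.+1 j.+1 = 2 ^ j.+1 + t %% 2 ^ j.
Proof. by rewrite /gL !Nat_powE !subn1. Qed.

Lemma gRS t j : gR t.+1 j.+1 = 2 ^ j.+1 + t %% 2 ^ j + 2 ^ j.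
Proof. by rewrite /gR gLS Nat_powE subn1. Qed.

Lemma mem_grid1 t : 1 \in grid t.
Proof. exact: mem_head. Qed.

Lemma mem_grid_gL t j : 3 * 2 ^ j <= t -> 2 ^ j.+1 + t %% 2 ^ j \in grid t.+1.
Proof.
move=> le_t; rewrite -gLS !inE mem_cat map_f ?orbT //.
by rewrite mem_iota ltn0Sn add1n ltnS gridL_topP.
Qed.

Lemma mem_grid_gR t j : 2 ^ j.+2 <= t -> 2 ^ j.+1 + t %% 2 ^ j + 2 ^ j \in grid t.+1.
Proof.
move=> le_t; rewrite -gRS !inE mem_cat map_f ?orbT //.
by rewrite mem_iota ltn0Sn add1n ltnS gridR_topP.
Qed.

Lemma gridP t g : g \in grid t.+1 ->
  [\/ g = 1,
      exists2 j, 3 * 2 ^ j <= t & g = 2 ^ j.+1 + t %% 2 ^ j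
    | exists2 j, 2 ^ j.+2 <= t & g = 2 ^ j.+1 + t %% 2 ^ j + 2 ^ j].
Proof.
rewrite inE mem_cat => /orP[/eqP -> | /orP[]]; first exact: Or31.
  case/mapP=> [[|j]]; rewrite mem_iota add1n => /andP[// _].
  by rewrite ltnS gridL_topP => le_t ->; apply: Or32; exists j; rewrite -?gLS.
case/mapP=> [[|j]]; rewrite mem_iota add1n => /andP[// _].
by rewrite ltnS gridR_topP => le_t ->; apply: Or33; exists j; rewrite -?gRS.
Qed.

Lemma grid_geometric t d :
  0 < d -> 2 * d <= t.+1 -> exists2 g, g \in grid t.+1 & d <= 2 * g <= 2 * d.
Proof.
move=> d_gt0 le_dt; case: (leqP d 2) => [le_d2 | gt_d2].
  by exists 1; [exact: mem_grid1 | lia].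
move: (trunc_log_bounds (isT : 1 < 2) d_gt0) => /= /andP[].
case: (trunc_log 2 d) => [|i]; rewrite !expnS ?expn0 => lo hi; first lia.
have r_lt := ltn_pmod t (expn_gt0 2 i).
case: (leqP (3 * 2 ^ i) d) => [le_3d | gt_3d].
  exists (2 ^ i.+1 + t %% 2 ^ i); first by apply: mem_grid_gL; lia.
  by rewrite expnS; lia.
move: lo hi r_lt gt_3d; case: i => [|h]; rewrite ?expnS ?expn0 => lo hi r_lt gt_3d.
  lia.
have r_lt' := ltn_pmod t (expn_gt0 2 h).
exists (2 ^ h.+1 + t %% 2 ^ h + 2 ^ h); last by rewrite expnS; lia.
by apply: mem_grid_gR; rewrite !expnS; lia.
Qed.

Lemma grid_card_le t :
  0 < t -> grid_card t.+1 <= trunc_log 2 t.+1 + trunc_log 2 t.+1.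
Proof.
move=> t_gt0; apply: leq_trans (size_undup _) _.
have := gridL_top_le t; have := leq_trunc_log 2 (leqnSn t).
have := trunc_log_gt0 2 t.+1; rewrite /= size_cat !size_map !size_iota /gridR_top subSS subn0.
lia.
Qed.

Lemma modn_pred_of_dvd m d : d %| m.+1 -> m %% d = d.-1.
Proof.
move=> dvd_d; have d_gt0 : 0 < d by case: d dvd_d.
have : d %| (m %% d).+1.
  by rewrite -(dvdn_addr _ (dvdn_mull (m %/ d) (dvdnn d))) addnS -divn_eq.
move/(dvdn_leq (ltn0Sn _)); have := ltn_pmod m d_gt0; lia.
Qed.

Lemma grid_recycling_left t j :
  3 * 2 ^ j <= t.+1 -> 2 ^ j.+1 + t.+1 %% 2 ^ j - 1 \in grid t.+1.
Proof.
move=> le_t; rewrite modnS; case: ifP => [dvd_j | ndvd_j]; last first.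
  have : t.+1 != 3 * 2 ^ j by apply: contraFneq ndvd_j => ->; apply: dvdn_mull.
  by rewrite addnS subn1 /= => ?; apply: mem_grid_gL; lia.
case: j le_t dvd_j => [|h] le_t dvd_j; first exact: mem_grid1.
have dvd_h : 2 ^ h %| t.+1 by apply: dvdn_trans dvd_j; rewrite dvdn_exp2l.
have h_gt0 := expn_gt0 2 h; rewrite !expnS in le_t.
rewrite (_ : _ - 1 = 2 ^ h.+1 + t %% 2 ^ h + 2 ^ h).
  by apply: mem_grid_gR; rewrite !expnS; lia.
by rewrite modn_pred_of_dvd // !expnS; lia.
Qed.

Lemma grid_recycling_right t j :
  2 ^ j.+2 <= t.+1 -> 2 ^ j.+1 + t.+1 %% 2 ^ j + 2 ^ j - 1 \in grid t.+1.
Proof.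
move=> le_t; rewrite modnS; case: ifP => [dvd_j | ndvd_j]; last first.
  have : t.+1 != 2 ^ j.+2 by apply: contraFneq ndvd_j => ->; rewrite !expnS mulnA dvdn_mull.
  by rewrite addnS addSn subn1 /= => ?; apply: mem_grid_gR; lia.
have j_gt0 := expn_gt0 2 j; rewrite !expnS in le_t.
rewrite (_ : _ - 1 = 2 ^ j.+1 + t %% 2 ^ j).
  by apply: mem_grid_gL; lia.
by rewrite modn_pred_of_dvd // !expnS; lia.
Qed.

Lemma grid_recycling t g : g \in grid t.+1 -> g != 1 -> g - 1 \in grid t.
Proof.
case: t => [|t]; first by case/gridP=> [->|[j]|[j]] //; have := expn_gt0 2 j; lia.
by case/gridP=> [-> | [j le_t ->] | [j le_t ->]] // _;
  [apply: grid_recycling_left | apply: grid_recycling_right].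
Qed.

Theorem lemma1 (t : nat) (ht : 2 <= t) :
  (forall d : nat, 1 <= d -> 2 * d <= t ->
     exists g, g \in grid t /\ d <= 2 * g /\ g <= d) /\
  (INR (grid_card t) < 3 * ln (INR t))%R /\
  (forall g : nat, g \in grid t.+1 -> g != 1 -> g - 1 \in grid t).
Proof.
case: t ht => [|t] // t_gt0.
split; [|split; last exact: grid_recycling].
  move=> d d_gt0 le_dt; have [g g_in /andP[le_d le_g]] := grid_geometric _ _ d_gt0 le_dt.
  by exists g; split=> //; split=> //; lia.
have a_gt0 : 0 < trunc_log 2 t.+1 by rewrite trunc_log_gt0.
apply: Rle_lt_trans (double_lt_3ln _ _ a_gt0 (trunc_logP _ (ltn0Sn t))) => //.
by apply: le_INR; apply/leP; apply: grid_card_le.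
Qed.
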